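(* Let $G$ be a graph and $\lambda>0$. If two nodes $a,b$ of $G$ are $(\ell,d)$ connected, then $$\mathbb{E}_G[x_ax_b]\;\ge\;1-\frac{2}{1+\dfrac{(1+(\tanh\lambda)^{\ell})^{d}}{(1-(\tanh\lambda)^{\ell})^{d}}}.$$
   Context: For a graph $G=(V,E)$ and $\lambda>0$, $f_G(\mathbf{x})=\frac{1}{Z}\exp\big(\sum_{(i,j)\in E}\lambda x_ix_j\big)$ on $\{-1,+1\}^V$, and $\mathbb{E}_G$ denotes expectation under $f_G$. Two nodes $a,b$ are $(\ell,d)$ connected if there exist $d$ node-disjoint paths between $a$ and $b$, each of length at most $\ell$. *)

From mathcomp Require Import all_boot all_order all_algebra.
From mathcomp Require Import reals sequences exp.
Set Implicit Arguments. Unset Strict Implicit. Unset Printing Implicit Defensive.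
Import Order.TTheory GRing.Theory Num.Theory.
Local Open Scope ring_scope.

Section IsingDefs.
Variable R : realType.
Variable V : finType.

Definition simple_graph (e : rel V) : Prop :=
  (forall u v, e u v = e v u) /\ (forall u, ~~ e u u).

Definition spin (b : bool) : R := if b then 1 else -1.

(* Ising energy sum_{(i,j) in E} lambda x_i x_j, each unordered edge counted once
   (the sum over ordered adjacent pairs is halved). *)
Definition ising_energy (e : rel V) (lam : R) (x : {ffun V -> bool}) : R :=
  (lam / 2) * \sum_(i : V) \sum_(j : V | e i j) spin (x i) * spin (x j).

Definition ising_weight (e : rel V) (lam : R) (x : {ffun V -> bool}) : R :=
  expR (ising_energy e lam x).

Definition ising_Z (e : rel V) (lam : R) : R :=
  \sum_(x : {ffun V -> bool}) ising_weight e lam x.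

Definition ising_corr (e : rel V) (lam : R) (a b : V) : R :=
  (\sum_(x : {ffun V -> bool}) spin (x a) * spin (x b) * ising_weight e lam x)
  / ising_Z e lam.

(* A (simple) path from a to b is the vertex sequence a :: p with consecutive
   vertices adjacent, ending at b, with no repeated vertex. Its length (number of
   edges) is size p. *)
Definition is_path_between (e : rel V) (a b : V) (p : seq V) : bool :=
  [&& path e a p, last a p == b & uniq (a :: p)].

(* Internal vertices of the path a :: p (all except the two endpoints). *)
Definition internal (a : V) (p : seq V) : seq V := behead (belast a p).

Definition ld_connected (e : rel V) (l d : nat) (a b : V) : Prop :=
  exists P : 'I_d -> seq V,
    injective P /\
    (forall i, is_path_between e a b (P i) /\ (size (P i) <= l)%N) /\
    (forall i j, i != j ->
       all (fun v => v \notin internal a (P j)) (internal a (P i))).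

End IsingDefs.

Definition tanhR {R : realType} (x : R) : R :=
  (expR x - expR (- x)) / (expR x + expR (- x)).

From mathcomp Require Import all_boot all_order all_algebra.
From mathcomp Require Import reals sequences exp.
From mathcomp Require Import ring lra zify.
From Stdlib Require Import FunctionalExtensionality.
Set Implicit Arguments. Unset Strict Implicit. Unset Printing Implicit Defensive.
Import Order.TTheory GRing.Theory Num.Theory.
Local Open Scope ring_scope.

(* Griffiths' second inequality, proved with Ginibre's duplicated-spin trick,
   says that spin correlations of a ferromagnetic Ising model are nondecreasing
   in every coupling. So E_G[x_a x_b] is at least the correlation for the
   couplings supported on the d paths, each path edge keeping the coupling lam:
   an edge lies on at most one path, since the paths are internally disjoint and
   G has no multiple edges. On this union of paths the internal spins can be
   summed out one vertex at a time; a path of length n contributes the factor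
   cosh^n lam + sinh^n lam x_a x_b, whence, with t = tanh lam,
     E[x_a x_b] = (P+ - P-) / (P+ + P-),  P+- = prod_k (1 +- t^(n_k)),
   which is at least the claimed bound because n_k <= l. *)

Lemma sum2_covariance (R : comNzRingType) (T : finType) (A B W : T -> R) :
  \sum_x \sum_y (A x - A y) * (B x - B y) * (W x * W y) =
  2 * ((\sum_x A x * B x * W x) * (\sum_y W y) -
       (\sum_x A x * W x) * (\sum_y B y * W y)).
Proof.
pose F x y := A x * B x * W x * W y - A x * W x * (B y * W y).
have -> : \sum_x \sum_y (A x - A y) * (B x - B y) * (W x * W y) =
          \sum_x \sum_y F x y + \sum_x \sum_y F y x.
  rewrite -big_split; apply: eq_bigr => x _; rewrite -big_split.
  by apply: eq_bigr => y _; rewrite /F /=; ring.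
rewrite [X in _ + X]exchange_big /=.
have -> : \sum_x \sum_y F x y = (\sum_x A x * B x * W x) * (\sum_y W y) -
                                (\sum_x A x * W x) * (\sum_y B y * W y).
  rewrite !mulr_suml -sumrB; apply: eq_bigr => x _.
  by rewrite !mulr_sumr -sumrB.
ring.
Qed.

Section Griffiths.
Variables (R : realType) (V : finType).
Local Notation cfg := {ffun V -> bool}.
Local Notation sp := (spin R).

Lemma spin_sq b : sp b * sp b = 1.
Proof. by case: b; rewrite /spin ?mulr1 ?mulrNN ?mulr1. Qed.

Lemma spin_eqb (b c : bool) : sp (b == c) = sp b * sp c.
Proof. by case: b; case: c; rewrite /spin /=; lra. Qed.

Definition monomial (p : seq V) (x : cfg) : R := \prod_(i <- p) sp (x i).

Lemma monomial_cat p q x : monomial (p ++ q) x = monomial p x * monomial q x.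
Proof. by rewrite /monomial big_cat. Qed.

Lemma monomial2 i j x : monomial [:: i; j] x = sp (x i) * sp (x j).
Proof. by rewrite /monomial !big_cons big_nil mulr1. Qed.

Lemma monomial_sign p x : monomial p x = 1 \/ monomial p x = -1.
Proof.
have /eqP : monomial p x ^+ 2 = 1.
  by rewrite expr2 /monomial -big_split big1 // => i _; apply: spin_sq.
by rewrite sqrf_eq1 => /orP [] /eqP ->; [left | right].
Qed.

Lemma monomial_le1 p x : monomial p x <= 1.
Proof. by case: (monomial_sign p x) => ->; lra. Qed.

Definition cfg_mul (x s : cfg) : cfg := [ffun i => x i == s i].

Lemma monomial_cfg_mul p x s : monomial p (cfg_mul x s) = monomial p x * monomial p s.
Proof.
by rewrite /monomial -big_split; apply: eq_bigr => i _; rewrite ffunE spin_eqb.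
Qed.

Lemma cfg_mul_inj x : injective (cfg_mul x).
Proof.
move=> s t /ffunP st; apply/ffunP => i; have := st i; rewrite !ffunE.
by case: (x i); case: (s i); case: (t i).
Qed.

Lemma prodr_count_mem (F : V -> R) (p : seq V) :
  \prod_(i <- p) F i = \prod_i F i ^+ count_mem i p.
Proof.
elim: p => [|j p IH]; first by rewrite big_nil big1 // => i _; rewrite expr0.
rewrite big_cons IH /=.
under [in RHS]eq_bigr => i _ do rewrite exprD.
rewrite big_split /=; congr (_ * _).
rewrite (bigD1 j) //= eqxx expr1 big1 ?mulr1 // => i /negbTE.
by rewrite eq_sym => ->; rewrite expr0.
Qed.

(* Expanding the product over the vertices, the sum factorizes into the sums
   [\sum_(b : bool) spin b ^+ m], each of which is [2] or [0]. *)
Lemma sum_monomial_ge0 p : 0 <= \sum_(x : cfg) monomial p x.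
Proof.
rewrite /monomial.
under eq_bigr => x _ do rewrite (prodr_count_mem (fun i => sp (x i))).
rewrite -(bigA_distr_bigA (fun i (b : bool) => sp b ^+ count_mem i p)) /=.
apply: prodr_ge0 => i _; rewrite big_bool /spin expr1n.
by rewrite -signr_odd; case: (odd _); rewrite ?expr1 ?expr0 /=; lra.
Qed.

Definition nonneg_comb (F : cfg -> R) : Prop :=
  exists (I : finType) (c : I -> R) (m : I -> seq V),
    (forall i, 0 <= c i) /\ forall x, F x = \sum_i c i * monomial (m i) x.

Lemma nonneg_comb_sum_ge0 F : nonneg_comb F -> 0 <= \sum_(x : cfg) F x.
Proof.
case=> I [c [m [c_ge0 defF]]].
under eq_bigr => x _ do rewrite defF.
rewrite exchange_big /=; apply: sumr_ge0 => i _.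
by rewrite -mulr_sumr mulr_ge0 // sum_monomial_ge0.
Qed.

Lemma nonneg_combM F G :
  nonneg_comb F -> nonneg_comb G -> nonneg_comb (fun x => F x * G x).
Proof.
case=> I [c [m [c_ge0 defF]]]; case=> J [c' [m' [c'_ge0 defG]]].
exists (I * J)%type, (fun ij => c ij.1 * c' ij.2), (fun ij => m ij.1 ++ m' ij.2).
split=> [[i j] | x]; first exact: mulr_ge0.
rewrite defF defG mulr_suml.
under eq_bigr => i _ do rewrite mulr_sumr.
by rewrite pair_big /=; apply: eq_bigr => -[i j] _; rewrite monomial_cat /=; ring.
Qed.

Lemma nonneg_comb_affine (c d : R) p :
  0 <= c -> 0 <= d -> nonneg_comb (fun x => c + d * monomial p x).
Proof.
move=> c_ge0 d_ge0.
exists bool, (fun b => if b then c else d), (fun b => if b then [::] else p).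
by split=> [[] | x] //; rewrite big_bool /= /monomial big_nil mulr1.
Qed.

Lemma nonneg_comb_monomial p : nonneg_comb (monomial p).
Proof.
by exists 'I_1, (fun _ => 1), (fun _ => p); split=> // x; rewrite big_ord1 mul1r.
Qed.

Inductive ferro_weight : (cfg -> R) -> Prop :=
| ferro_weight1 : ferro_weight (fun _ => 1)
| ferro_weight_factor W (c d : R) p : ferro_weight W -> 0 <= d -> d < c ->
    ferro_weight (fun x => W x * (c + d * monomial p x)).

Lemma ferro_weight_gt0 W : ferro_weight W -> forall x, 0 < W x.
Proof.
elim=> [|W' c d p _ IH d_ge0 d_lt_c] x //.
by apply: mulr_gt0 => //; case: (monomial_sign p x) => ->; lra.
Qed.

Lemma ferro_weight_ext W U : ferro_weight W -> W =1 U -> ferro_weight U.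
Proof. by move=> fW /functional_extensionality <-. Qed.

Lemma ferro_weightM W U :
  ferro_weight W -> ferro_weight U -> ferro_weight (fun x => W x * U x).
Proof.
move=> fW; elim=> {U} [|U c d q _ IH d_ge0 d_lt_c].
  by apply: ferro_weight_ext fW _ => x; rewrite mulr1.
apply: ferro_weight_ext (ferro_weight_factor q IH d_ge0 d_lt_c) _ => x.
by rewrite mulrA.
Qed.

(* Each factor [c + d m] of [W] pairs with the factor [c + d m s] of
   [W (cfg_mul x s)], using [m ^+ 2 = 1]. *)
Lemma ferro_weight_dup W s :
  ferro_weight W -> nonneg_comb (fun x => W x * W (cfg_mul x s)).
Proof.
elim=> {W} [|W c d p _ IH d_ge0 d_lt_c].
  exists 'I_1, (fun _ => 1), (fun _ => [::]); split=> // x.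
  by rewrite big_ord1 /monomial big_nil !mulr1.
have ms_pm := monomial_sign p s.
have [nonneg_c' nonneg_d'] : 0 <= c * c + d * d * monomial p s /\
                             0 <= c * d * (1 + monomial p s).
  by case: ms_pm => ->; split; nra.
have [I [k [m [k_ge0 defF]]]] := nonneg_combM IH (nonneg_comb_affine p nonneg_c' nonneg_d').
exists I, k, m; split=> // x; rewrite -defF monomial_cfg_mul.
have mx_sq : monomial p x * monomial p x = 1 by case: (monomial_sign p x) => ->; lra.
set mx := monomial p x; set ms := monomial p s.
have -> : c * c + d * d * ms + c * d * (1 + ms) * mx =
          (c + d * mx) * (c + d * (mx * ms)).
  transitivity (c * c + d * d * ms * (mx * mx) + c * d * (1 + ms) * mx).
    by rewrite mx_sq mulr1.
  ring.
ring.
Qed.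


Definition wsum (W F : cfg -> R) : R := \sum_x F x * W x.

Definition corr (W F : cfg -> R) : R := wsum W F / wsum W (fun _ => 1).

Lemma corr_ext W U F : W =1 U -> corr W F = corr U F.
Proof.
by move=> eWU; rewrite /corr /wsum; congr (_ / _); apply: eq_bigr => x _; rewrite eWU.
Qed.

Lemma wsum1_gt0 W : ferro_weight W -> 0 < wsum W (fun _ => 1).
Proof.
move=> fW; rewrite /wsum (bigD1 [ffun => true]) //=.
apply: ltr_wpDr; last by rewrite mul1r ferro_weight_gt0.
by apply: sumr_ge0 => x _; rewrite mul1r ltW // ferro_weight_gt0.
Qed.

(* Ginibre's trick: substitute [y := cfg_mul x s] and sum over [s] first. *)
Lemma ginibre_ge0 W p q : ferro_weight W ->
  0 <= \sum_x \sum_y (monomial p x - monomial p y) *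
                     (monomial q x - monomial q y) * (W x * W y).
Proof.
move=> fW.
rewrite (_ : \sum_x _ = \sum_s ((1 - monomial p s) * (1 - monomial q s)) *
                 \sum_x monomial (p ++ q) x * (W x * W (cfg_mul x s))); last first.
  transitivity (\sum_x \sum_s (monomial p x - monomial p (cfg_mul x s)) *
     (monomial q x - monomial q (cfg_mul x s)) * (W x * W (cfg_mul x s))).
    by apply: eq_bigr => x _; rewrite (reindex_inj (cfg_mul_inj (x := x))).
  rewrite exchange_big /=; apply: eq_bigr => s _; rewrite mulr_sumr.
  by apply: eq_bigr => x _; rewrite !monomial_cfg_mul monomial_cat; ring.
apply: sumr_ge0 => s _; apply: mulr_ge0.
  by apply: mulr_ge0; rewrite subr_ge0 monomial_le1.
apply: nonneg_comb_sum_ge0.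
exact: nonneg_combM (nonneg_comb_monomial (p ++ q)) (ferro_weight_dup s fW).
Qed.

Lemma griffiths2 W p q : ferro_weight W ->
  wsum W (monomial p) * wsum W (monomial q) <=
  wsum W (monomial (p ++ q)) * wsum W (fun _ => 1).
Proof.
move=> fW; have := ginibre_ge0 p q fW; rewrite sum2_covariance.
have -> : \sum_x monomial p x * monomial q x * W x = wsum W (monomial (p ++ q)).
  by apply: eq_bigr => x _; rewrite monomial_cat.
have -> : \sum_y W y = wsum W (fun _ => 1) by apply: eq_bigr => y _; rewrite mul1r.
rewrite -/(wsum W (monomial p)) -/(wsum W (monomial q)); lra.
Qed.

Lemma wsum_factor W c d p q :
  wsum (fun x => W x * (c + d * monomial q x)) (monomial p) =
  c * wsum W (monomial p) + d * wsum W (monomial (p ++ q)).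
Proof.
rewrite /wsum !mulr_sumr -big_split /=; apply: eq_bigr => x _.
by rewrite monomial_cat; ring.
Qed.

Lemma wsum_monomial_nil W : wsum W (monomial [::]) = wsum W (fun _ => 1).
Proof. by apply: eq_bigr => x _; rewrite /monomial big_nil. Qed.

Lemma corr_le_factor W c d p q : ferro_weight W -> 0 <= d -> d < c ->
  corr W (monomial p) <= corr (fun x => W x * (c + d * monomial q x)) (monomial p).
Proof.
move=> fW d_ge0 d_lt_c.
have Z_gt0 := wsum1_gt0 fW.
have Z'_gt0 := wsum1_gt0 (ferro_weight_factor q fW d_ge0 d_lt_c).
have := griffiths2 p q fW.
rewrite /corr ler_pdivlMr // mulrAC ler_pdivrMr // -!wsum_monomial_nil !wsum_factor /=.
rewrite !wsum_monomial_nil; nra.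
Qed.

Lemma corr_le_ferroM W U p : ferro_weight W -> ferro_weight U ->
  corr W (monomial p) <= corr (fun x => W x * U x) (monomial p).
Proof.
move=> fW; elim=> {U} [|U c d q fU IH d_ge0 d_lt_c].
  by rewrite (corr_ext (U := W)) // => x; rewrite mulr1.
apply: (le_trans IH).
rewrite [X in _ <= X](corr_ext (U := fun x => W x * U x * (c + d * monomial q x))).
  exact: corr_le_factor (ferro_weightM fW fU) d_ge0 d_lt_c.
by move=> x; rewrite mulrA.
Qed.

End Griffiths.

Definition coshR {R : realType} (m : R) : R := (expR m + expR (- m)) / 2.
Definition sinhR {R : realType} (m : R) : R := (expR m - expR (- m)) / 2.

Section Hyperbolic.
Variable R : realType.
Implicit Types m y : R.

Lemma expR_sign m y : y = 1 \/ y = -1 -> expR (m * y) = coshR m + sinhR m * y.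
Proof. by case=> ->; rewrite /coshR /sinhR ?mulr1 ?mulrN1; field. Qed.

Lemma sinhR_gt0 m : 0 < m -> 0 < sinhR m.
Proof. by move=> m_gt0; rewrite /sinhR divr_gt0 // subr_gt0 ltr_expR; lra. Qed.

Lemma sinhR_ge0 m : 0 <= m -> 0 <= sinhR m.
Proof. by move=> m_ge0; rewrite /sinhR divr_ge0 // subr_ge0 ler_expR; lra. Qed.

Lemma sinhR_lt_coshR m : sinhR m < coshR m.
Proof. by rewrite /sinhR /coshR; have := expR_gt0 (- m); lra. Qed.

Lemma tanhRE m : tanhR m = sinhR m / coshR m.
Proof.
rewrite /tanhR /sinhR /coshR; field.
by rewrite lt0r_neq0 // addr_gt0 ?expR_gt0.
Qed.

End Hyperbolic.

Section Couplings.
Variables (R : realType) (V : finType).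
Local Notation cfg := {ffun V -> bool}.
Local Notation sp := (spin R).
Local Notation monomial := (@monomial R V).
Local Notation ferro_weight := (@ferro_weight R V).

Definition gibbs_weight (J : V -> V -> R) (x : cfg) : R :=
  expR (\sum_i \sum_j J i j * (sp (x i) * sp (x j))).

Lemma spin_prod_sign (x : cfg) i j : sp (x i) * sp (x j) = 1 \/ sp (x i) * sp (x j) = -1.
Proof. by rewrite -monomial2; apply: monomial_sign. Qed.

Lemma ferro_weight_prod (T : Type) (r : seq T) (F : T -> cfg -> R) :
  (forall t, ferro_weight (F t)) -> ferro_weight (fun x => \prod_(t <- r) F t x).
Proof.
move=> fF; elim: r => [|t r IH].
  by apply: ferro_weight_ext (ferro_weight1 _ _) _ => x; rewrite big_nil.
by apply: ferro_weight_ext (ferro_weightM (fF t) IH) _ => x; rewrite big_cons.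
Qed.

Lemma ferro_weight_affine c d p :
  0 <= d -> d < c -> ferro_weight (fun x => c + d * monomial p x).
Proof.
move=> d_ge0 d_lt_c.
by apply: ferro_weight_ext (ferro_weight_factor p (ferro_weight1 _ _) d_ge0 d_lt_c) _ => x;
   rewrite mul1r.
Qed.

Lemma ferro_gibbs_weight J : (forall i j, 0 <= J i j) -> ferro_weight (gibbs_weight J).
Proof.
move=> J_ge0.
apply: ferro_weight_ext (ferro_weight_prod (enum V) (fun i =>
  ferro_weight_prod (enum V) (fun j =>
    ferro_weight_affine [:: i; j] (sinhR_ge0 (J_ge0 i j)) (sinhR_lt_coshR (J i j))))) _.
move=> x; rewrite /gibbs_weight expR_sum big_enum /=; apply: eq_bigr => i _.
rewrite expR_sum big_enum /=; apply: eq_bigr => j _.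
by rewrite monomial2 expR_sign //; apply: spin_prod_sign.
Qed.

Lemma gibbs_weightD J1 J2 x :
  gibbs_weight (fun i j => J1 i j + J2 i j) x = gibbs_weight J1 x * gibbs_weight J2 x.
Proof.
rewrite /gibbs_weight -expRD -big_split /=; congr expR; apply: eq_bigr => i _.
by rewrite -big_split; apply: eq_bigr => j _; rewrite mulrDl.
Qed.

Lemma corr_gibbs_le J1 J2 p : (forall i j, 0 <= J1 i j <= J2 i j) ->
  corr (gibbs_weight J1) (monomial p) <= corr (gibbs_weight J2) (monomial p).
Proof.
move=> J12.
rewrite [X in _ <= X](corr_ext (U := fun x =>
  gibbs_weight J1 x * gibbs_weight (fun i j => J2 i j - J1 i j) x)).
  apply: corr_le_ferroM; apply: ferro_gibbs_weight => [i j]; first by case/andP: (J12 i j).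
  by case/andP: (J12 i j) => _; rewrite subr_ge0.
move=> x; rewrite -gibbs_weightD /gibbs_weight; congr expR.
by apply: eq_bigr => i _; apply: eq_bigr => j _; rewrite addrC subrK.
Qed.

End Couplings.

Section Flip.
Variables (R : realType) (V : finType).
Local Notation cfg := {ffun V -> bool}.
Local Notation sp := (spin R).

Definition flip (v : V) (x : cfg) : cfg := [ffun i => if i == v then ~~ x i else x i].

Lemma flipK v : involutive (flip v).
Proof. by move=> x; apply/ffunP => i; rewrite !ffunE; case: eqP => // _; apply: negbK. Qed.

Lemma sum_flip v (F : cfg -> R) : \sum_x F (flip v x) = \sum_x F x.
Proof. by rewrite [in RHS](reindex_inj (inv_inj (flipK v))). Qed.

Lemma spin_flip_eq v x : sp (flip v x v) = - sp (x v).
Proof. by rewrite ffunE eqxx; case: (x v); rewrite /spin /= ?opprK. Qed.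

Lemma spin_flip_neq v x i : i != v -> sp (flip v x i) = sp (x i).
Proof. by rewrite ffunE => /negbTE ->. Qed.

Lemma sum_flip_average v (F H : cfg -> R) :
  (forall x, F x + F (flip v x) = H x + H x) -> \sum_x F x = \sum_x H x.
Proof.
move=> FH; suff : \sum_x F x + \sum_x F x = \sum_x H x + \sum_x H x by lra.
by rewrite -{2}(sum_flip v) -!big_split /=; apply: eq_bigr => x _; apply: FH.
Qed.

(* Averaging over the spin at [v] kills the terms that are odd in it. *)
Lemma sum_out_vertex (C D K L : R) a v b (G : cfg -> R) :
  v != a -> v != b -> (forall x, G (flip v x) = G x) ->
  \sum_x G x * ((C + D * (sp (x a) * sp (x v))) * (K + L * (sp (x v) * sp (x b)))) =
  \sum_x G x * (C * K + D * L * (sp (x a) * sp (x b))).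
Proof.
move=> va vb Gv; apply: (sum_flip_average (v := v)) => x.
rewrite Gv spin_flip_eq !spin_flip_neq 1?eq_sym //.
have sv2 := spin_sq R (x v).
transitivity (G x * (C * K + D * L * (sp (x a) * sp (x b)) * (sp (x v) * sp (x v))) *+ 2).
  by rewrite mulr2n; ring.
by rewrite sv2 mulr1 mulr2n.
Qed.

Lemma sum_spin_pair a b (G : R -> R) : a != b ->
  \sum_(x : cfg) G (sp (x a) * sp (x b)) = \sum_(x : cfg) (G 1 + G (-1)) / 2.
Proof.
move=> ab; apply: (sum_flip_average (v := b)) => x.
rewrite spin_flip_eq spin_flip_neq // mulrN.
by case: (x a); case: (x b); rewrite /spin ?mulr1 ?mulrN1 ?mulN1r ?opprK; field.
Qed.

End Flip.

Section PathSeq.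
Variable V : finType.
Implicit Types (a w : V) (p : seq V).

Definition path_edges a p : seq (V * V) := zip (a :: p) p.

Lemma mem_zip (s t : seq V) q : q \in zip s t -> q.1 \in s /\ q.2 \in t.
Proof.
elim: s t => [|y s IH] [|z t] //=; rewrite in_cons => /orP [/eqP -> | /IH [] ] /=.
  by rewrite !mem_head.
by rewrite !in_cons => -> ->; rewrite !orbT.
Qed.

Lemma mem_path_edges a p q : q \in path_edges a p -> q.1 \in a :: p /\ q.2 \in p.
Proof. exact: mem_zip. Qed.

Lemma internal_sub a p : {subset internal a p <= p}.
Proof. by case: p => [|v p] //= w; apply: mem_belast. Qed.

Lemma internal_neq_head a p w : uniq (a :: p) -> w \in internal a p -> w != a.
Proof. by case/andP=> ap _ /internal_sub wp; apply: contraNneq ap => <-. Qed.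

Lemma internal_neq_last a p w : uniq (a :: p) -> w \in internal a p -> w != last a p.
Proof.
case: p => [|v p] // ap wp.
have : uniq (v :: p) by case/andP: ap.
rewrite (lastI v p) rcons_uniq => /andP [lp _].
by rewrite /= last_rcons; apply: contraNneq lp => <-.
Qed.

Lemma mem_path_split a p w :
  w \in a :: p -> [\/ w = a, w = last a p | w \in internal a p].
Proof.
rewrite in_cons => /orP [/eqP -> | ]; first by constructor 1.
case: p => [|v p] // wp; rewrite (lastI v p) mem_rcons in_cons in wp.
case/orP: wp => [/eqP -> | wp]; last by constructor 3.
by constructor 2.
Qed.


Lemma path_edges_rel (e : rel V) a p q : path e a p -> q \in path_edges a p -> e q.1 q.2.
Proof.
elim: p a => [|v p IH] a //= /andP [av vp]; rewrite in_cons => /orP [/eqP -> // | qp].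
exact: IH vp qp.
Qed.

Lemma index_zip_behead (s : seq V) u v : uniq s -> (u, v) \in zip s (behead s) ->
  index v s = (index u s).+1.
Proof.
elim: s => [|x [|y s] IH] //= /andP [xs s_uniq]; rewrite in_cons.
case/orP=> [/eqP [-> ->] | uv].
  have xy : x != y by apply: contraNneq xs => ->; apply: mem_head.
  by rewrite (negbTE xy) !eqxx.
have [us vs] := mem_zip uv.
have xu : x != u by apply: contraNneq xs => ->.
have xv : x != v by apply: contraNneq xs => ->; rewrite in_cons vs orbT.
by move: (IH s_uniq uv) => /= ->; rewrite (negbTE xu) (negbTE xv).
Qed.

Lemma path_edges_uniq a p : uniq (a :: p) -> uniq (path_edges a p).
Proof. exact: zip_uniql. Qed.

Lemma path_edges_asym a p i j : uniq (a :: p) ->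
  (i, j) \in path_edges a p -> (j, i) \notin path_edges a p.
Proof.
move=> ap ij; apply/negP => ji.
have := index_zip_behead ap ij; have := index_zip_behead ap ji; lia.
Qed.

Lemma path_edges_ends a p : uniq (a :: p) ->
  (a, last a p) \in path_edges a p -> p = [:: last a p].
Proof.
case: p => [|v p] // avp; rewrite /path_edges /= in_cons.
case/orP=> [/eqP [lv] | /mem_zip [/= ap _]]; last by move: avp; rewrite /= ap.
case: p avp lv => [|w p] // /and3P [_ vwp _] /= lv.
by move: vwp; rewrite -lv mem_last.
Qed.

End PathSeq.

Section Decimation.
Variables (R : realType) (V : finType) (C D : R).
Local Notation cfg := {ffun V -> bool}.
Local Notation sp := (spin R).

Definition path_weight (a : V) (p : seq V) (x : cfg) : R :=
  \prod_(q <- path_edges a p) (C + D * (sp (x q.1) * sp (x q.2))).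

Lemma path_weight_cons a v p x :
  path_weight a (v :: p) x = (C + D * (sp (x a) * sp (x v))) * path_weight v p x.
Proof. by rewrite /path_weight /path_edges /= big_cons. Qed.

Lemma path_weight_flip a p w x :
  w \notin a :: p -> path_weight a p (flip w x) = path_weight a p x.
Proof.
move=> wp; apply: eq_big_seq => q /mem_path_edges [q1 q2].
rewrite !spin_flip_neq //; apply: contraNneq wp => <- //.
by rewrite in_cons q2 orbT.
Qed.

Lemma sum_path_weight a v p (G : cfg -> R) : uniq [:: a, v & p] ->
  (forall w, w \in internal a (v :: p) -> forall x, G (flip w x) = G x) ->
  \sum_x G x * path_weight a (v :: p) x =
  \sum_x G x * (C ^+ (size p).+1 + D ^+ (size p).+1 * (sp (x a) * sp (x (last v p)))).
Proof.
elim: p a v G => [|w p IH] a v G avp Ginv.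
  by apply: eq_bigr => x _; rewrite /path_weight /= big_cons big_nil mulr1 !expr1.
have [va a_notin v_notin] : [/\ v != a, a \notin w :: p & v \notin w :: p].
  case/andP: avp => /norP [av ->] /andP [-> _]; by rewrite eq_sym.
pose G' x := G x * (C + D * (sp (x a) * sp (x v))).
have G'inv w' : w' \in internal v (w :: p) -> forall x, G' (flip w' x) = G' x.
  move=> w'p x; have w'wp : w' \in w :: p := internal_sub w'p.
  have aw' : a != w' by apply: contraNneq a_notin => ->.
  have vw' : v != w' by apply: contraNneq v_notin => ->.
  by rewrite /G' Ginv ?spin_flip_neq //= in_cons w'p orbT.
transitivity (\sum_x G' x * path_weight v (w :: p) x).
  by apply: eq_bigr => x _; rewrite path_weight_cons /G' mulrA.
rewrite IH //; last by case/andP: avp.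
have v_neq_last : v != last w p.
  by apply: contraNneq v_notin => ->; apply: mem_last.
transitivity (\sum_x G x * ((C + D * (sp (x a) * sp (x v))) *
       (C ^+ (size p).+1 + D ^+ (size p).+1 * (sp (x v) * sp (x (last w p)))))).
  by apply: eq_bigr => x _; rewrite /G' -mulrA.
by rewrite sum_out_vertex // => x; apply: Ginv; rewrite /= mem_head.
Qed.

End Decimation.

Section DisjointPaths.
Variables (V : finType) (a b : V) (d : nat) (P : 'I_d -> seq V).
Hypothesis P_uniq : forall k, uniq (a :: P k).
Hypothesis P_last : forall k, last a (P k) = b.

Lemma path_neq_nil : a != b -> forall k, P k != [::].
Proof. by move=> ab k; apply: contraNneq ab => Pk; rewrite -(P_last k) Pk. Qed.

Lemma internal_neq_ends k w : w \in internal a (P k) -> w != a /\ w != b.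
Proof.
move=> wk; split; first exact: internal_neq_head (P_uniq k) wk.
by rewrite -(P_last k); apply: internal_neq_last (P_uniq k) wk.
Qed.

Hypothesis P_disjoint : forall k j, k != j ->
  forall w, w \in internal a (P k) -> w \notin internal a (P j).

Lemma internal_notin_other k j w : k != j -> w \in internal a (P k) -> w \notin a :: P j.
Proof.
move=> kj wk; have [wa wb] := internal_neq_ends wk.
apply/negP => /mem_path_split [wa' | wb' | wj].
- by move/eqP: wa.
- by move: wb; rewrite wb' P_last eqxx.
- by move: (P_disjoint kj wk); rewrite wj.
Qed.

End DisjointPaths.

Section PathFamilyDecimation.
Variables (R : realType) (V : finType) (C D : R).
Variables (a b : V) (d : nat) (P : 'I_d -> seq V).
Hypothesis P_uniq : forall k, uniq (a :: P k).
Hypothesis P_last : forall k, last a (P k) = b.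
Hypothesis P_neq_nil : forall k, P k != [::].
Hypothesis P_disjoint : forall k j, k != j ->
  forall w, w \in internal a (P k) -> w \notin internal a (P j).
Local Notation cfg := {ffun V -> bool}.
Local Notation sp := (spin R).

Definition path_factor (k : 'I_d) (x : cfg) : R :=
  C ^+ size (P k) + D ^+ size (P k) * (sp (x a) * sp (x b)).

Lemma sum_path_weights (r : seq 'I_d) (G : cfg -> R) : uniq r ->
  (forall k w, k \in r -> w \in internal a (P k) -> forall x, G (flip w x) = G x) ->
  \sum_x G x * \prod_(k <- r) path_weight C D a (P k) x =
  \sum_x G x * \prod_(k <- r) path_factor k x.
Proof.
elim: r G => [|k r IH] G; first by move=> _ _; apply: eq_bigr => x _; rewrite !big_nil.
case/andP=> kr r_uniq Ginv.
pose G' x := G x * path_weight C D a (P k) x.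
transitivity (\sum_x G' x * \prod_(j <- r) path_weight C D a (P j) x).
  by apply: eq_bigr => x _; rewrite big_cons mulrA.
rewrite IH // => [|j w jr wj x]; last first.
  rewrite /G' (Ginv j w) ?in_cons ?jr ?orbT // path_weight_flip //.
  apply: (internal_notin_other P_uniq P_last P_disjoint _ wj).
  by apply: contraNneq kr => <-.
transitivity (\sum_x (G x * \prod_(j <- r) path_factor j x) * path_weight C D a (P k) x).
  by apply: eq_bigr => x _; rewrite /G'; ring.
case Pk: (P k) (P_uniq k) (P_last k) (P_neq_nil k) => [|v p] // vp_uniq vp_last _.
rewrite sum_path_weight // => [|w wk x].
  apply: eq_bigr => x _; rewrite big_cons /path_factor Pk /=.
  by move: vp_last => /= ->; ring.
rewrite (Ginv k w) ?mem_head ?Pk //; congr (_ * _); apply: eq_bigr => j _.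
have [wa wb] : w != a /\ w != b.
  by apply: (internal_neq_ends (k := k) P_uniq P_last); rewrite Pk.
by rewrite /path_factor !spin_flip_neq 1?eq_sym.
Qed.

Lemma sum_spin_pair_path_weights (H : R -> R) : a != b ->
  \sum_(x : cfg) H (sp (x a) * sp (x b)) * \prod_k path_weight C D a (P k) x =
  \sum_(x : cfg) (H 1 * \prod_k (C ^+ size (P k) + D ^+ size (P k)) +
                  H (-1) * \prod_k (C ^+ size (P k) - D ^+ size (P k))) / 2.
Proof.
move=> ab; rewrite sum_path_weights ?index_enum_uniq // => [|k w _ wk x]; last first.
  by have [wa wb] := internal_neq_ends P_uniq P_last wk; rewrite !spin_flip_neq 1?eq_sym.
pose F s := H s * \prod_k (C ^+ size (P k) + D ^+ size (P k) * s).
rewrite (eq_bigr (fun x : cfg => F (sp (x a) * sp (x b)))) // sum_spin_pair //.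
apply: eq_bigr => x _; congr ((_ + _) / 2); congr (_ * _); apply: eq_bigr => k _.
  by rewrite mulr1.
by rewrite mulrN1.
Qed.

End PathFamilyDecimation.

Section EdgeMultiplicity.
Local Open Scope nat_scope.
Variables (V : finType) (e : rel V) (a b : V) (d : nat) (P : 'I_d -> seq V).
Hypothesis e_simple : simple_graph e.
Hypothesis P_inj : injective P.
Hypothesis P_uniq : forall k, uniq (a :: P k).
Hypothesis P_last : forall k, last a (P k) = b.
Hypothesis P_path : forall k, path e a (P k).
Hypothesis P_disjoint : forall k j, k != j ->
  forall w, w \in internal a (P k) -> w \notin internal a (P j).

Definition edge_mult k i j : nat :=
  ((i, j) \in path_edges a (P k)) + ((j, i) \in path_edges a (P k)).

Lemma edge_mult_sym k i j : edge_mult k i j = edge_mult k j i.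
Proof. by rewrite /edge_mult addnC. Qed.

Lemma edge_mult_le1 k i j : edge_mult k i j <= 1.
Proof.
rewrite /edge_mult; case ij: (_ \in _) => /=; last exact: leq_b1.
by rewrite (negbTE (path_edges_asym (P_uniq k) ij)).
Qed.

Lemma edge_mult_gt0 k i j : 0 < edge_mult k i j ->
  (i, j) \in path_edges a (P k) \/ (j, i) \in path_edges a (P k).
Proof. by rewrite /edge_mult; case: (_ \in _); case: (_ \in _); [left|left|right|]. Qed.

Lemma edge_mult_rel k i j : 0 < edge_mult k i j -> e i j.
Proof.
case/edge_mult_gt0 => [ij | ji]; first exact: path_edges_rel (P_path k) ij.
by case: e_simple => e_sym _; rewrite e_sym; apply: path_edges_rel (P_path k) ji.
Qed.

Lemma edge_mult_mem k i j : 0 < edge_mult k i j -> i \in a :: P k /\ j \in a :: P k.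
Proof.
have mem q : q \in path_edges a (P k) -> q.1 \in a :: P k /\ q.2 \in a :: P k.
  by case/mem_path_edges => -> q2; rewrite in_cons q2 orbT.
by case/edge_mult_gt0 => /mem [].
Qed.

Lemma edge_mult_ends k : 0 < edge_mult k a b -> P k = [:: b].
Proof.
rewrite -(P_last k); case/edge_mult_gt0 => [| /mem_path_edges [_ /= ak]].
  by apply: path_edges_ends; apply: P_uniq.
by case/andP: (P_uniq k); rewrite ak.
Qed.

Lemma mem_two_paths k j w : k != j -> w \in a :: P k -> w \in a :: P j -> w = a \/ w = b.
Proof.
move=> kj /mem_path_split [-> | -> | wk] wj; [by left | by right; apply: P_last |].
by move: wj; rewrite (negbTE (internal_notin_other P_uniq P_last P_disjoint kj wk)).
Qed.

(* Two distinct paths share only their end points, and at most one of them is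
   the single edge from [a] to [b]. *)
Lemma edge_mult_disjoint k j u v : k != j ->
  0 < edge_mult k u v -> 0 < edge_mult j u v -> False.
Proof.
move=> kj ku kv.
have [[uk vk] [uj vj]] := (edge_mult_mem ku, edge_mult_mem kv).
have uv : u != v.
  by apply: contraPneq (edge_mult_rel ku) => ->; case: e_simple => _ /(_ v)/negP.
have single l : 0 < edge_mult l u v -> P l = [:: b].
  move=> lu; apply: edge_mult_ends.
  have [ua | ub] := mem_two_paths kj uk uj; have [va | vb] := mem_two_paths kj vk vj.
  - by move: uv; rewrite ua va eqxx.
  - by rewrite -ua -vb.
  - by rewrite edge_mult_sym -ub -va.
  - by move: uv; rewrite ub vb eqxx.
by move/eqP: kj; apply; apply: P_inj; rewrite (single _ ku) (single _ kv).
Qed.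

Lemma sum_edge_mult_le i j : \sum_(k < d) edge_mult k i j <= e i j.
Proof.
have [k k_gt0 | none] := pickP (fun k => 0 < edge_mult k i j).
  rewrite (edge_mult_rel k_gt0) (bigD1 k) //= big1 ?addn0 ?edge_mult_le1 // => j' j'k.
  by apply/eqP; rewrite -leqn0 leqNgt; apply/negP => /(edge_mult_disjoint j'k)/(_ k_gt0).
by rewrite big1 // => k _; apply/eqP; rewrite -leqn0 leqNgt none.
Qed.

End EdgeMultiplicity.

Section TanhBound.
Variable R : realFieldType.

Lemma one_sub_two_div_le (x y : R) : 0 <= x -> x <= y -> 1 - 2 / (1 + x) <= 1 - 2 / (1 + y).
Proof.
move=> x_ge0 xy; rewrite lerD2l lerN2 ler_wpM2l // lef_pV2 ?posrE; lra.
Qed.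

Lemma ratio_le (s u : R) :
  0 <= s -> s <= u -> u < 1 -> (1 + s) / (1 - s) <= (1 + u) / (1 - u).
Proof.
move=> s_ge0 su u_lt1; rewrite ler_pdivrMr ?subr_gt0 ?(le_lt_trans su) //.
rewrite mulrAC ler_pdivlMr ?subr_gt0 // -subr_ge0.
by rewrite (_ : _ - _ = 2 * (u - s)); [rewrite mulr_ge0 ?subr_ge0 | ring].
Qed.

Lemma paths_ratio_bound (C D : R) (l d : nat) (n : 'I_d -> nat) :
  0 < D -> D < C -> (forall k, 0 < n k <= l)%N ->
  1 - 2 / (1 + (1 + (D / C) ^+ l) ^+ d / (1 - (D / C) ^+ l) ^+ d) <=
  (\prod_k (C ^+ n k + D ^+ n k) - \prod_k (C ^+ n k - D ^+ n k)) /
  (\prod_k (C ^+ n k + D ^+ n k) + \prod_k (C ^+ n k - D ^+ n k)).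
Proof.
move=> D_gt0 DC n_bnd; have C_gt0 : 0 < C by lra.
set t := D / C; have [t_gt0 t_lt1] : 0 < t /\ t < 1.
  by rewrite divr_gt0 // ltr_pdivrMr // mul1r.
have Dn_lt_Cn k : D ^+ n k < C ^+ n k.
  by rewrite ltrXn2r ?ltW // -lt0n; case/andP: (n_bnd k).
set gp := \prod_k _; set gm := \prod_k _.
have gm_gt0 : 0 < gm by apply: prodr_gt0 => k _; rewrite subr_gt0.
have gp_gt0 : 0 < gp by apply: prodr_gt0 => k _; rewrite addr_gt0 ?exprn_gt0.
set r := (1 + t ^+ l) / (1 - t ^+ l).
have r_ge0 : 0 <= r by rewrite divr_ge0 // ?subr_ge0 ?addr_ge0 ?exprn_ge0 ?exprn_ile1 ?ltW.
have r_le k : r <= (C ^+ n k + D ^+ n k) / (C ^+ n k - D ^+ n k).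
  have -> : (C ^+ n k + D ^+ n k) / (C ^+ n k - D ^+ n k) = (1 + t ^+ n k) / (1 - t ^+ n k).
    rewrite /t expr_div_n; field.
    by rewrite !lt0r_neq0 ?subr_gt0 ?exprn_gt0.
  case/andP: (n_bnd k) => nk_gt0 nk_le.
  apply: ratio_le; first exact/exprn_ge0/ltW.
    exact: ler_wiXn2l (ltW t_gt0) (ltW t_lt1) _ _ nk_le.
  by rewrite exprn_ilt1 ?ltW // -lt0n.
have rd_le : r ^+ d <= gp / gm.
  rewrite /gp /gm -prodf_div (_ : r ^+ d = \prod_(k < d) r); last first.
    by rewrite prodr_const card_ord.
  by apply: ler_prod => k _; rewrite r_ge0 r_le.
rewrite -expr_div_n -/r (_ : (gp - gm) / (gp + gm) = 1 - 2 / (1 + gp / gm)).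
  by apply: one_sub_two_div_le; rewrite ?exprn_ge0.
by field; rewrite !lt0r_neq0 ?addr_gt0.
Qed.

End TanhBound.

Lemma sumr_const_div (R : numFieldType) (T : finType) (x0 : T) (c1 c2 : R) :
  (\sum_(x : T) c1) / (\sum_(x : T) c2) = c1 / c2.
Proof.
rewrite !sumr_const -[c1 *+ _]mulr_natr -[c2 *+ _]mulr_natr invfM mulrACA.
by rewrite divff ?mulr1 // pnatr_eq0 -lt0n; apply/card_gt0P; exists x0.
Qed.

Section IsingModel.
Variables (R : realType) (V : finType).
Local Notation cfg := {ffun V -> bool}.
Local Notation sp := (spin R).

Definition ising_coupling (e : rel V) (lam : R) (i j : V) : R :=
  if e i j then lam / 2 else 0.

Lemma ising_weight_gibbs e lam x :
  ising_weight e lam x = gibbs_weight (ising_coupling e lam) x.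
Proof.
rewrite /ising_weight /gibbs_weight /ising_energy; congr expR.
rewrite mulr_sumr; apply: eq_bigr => i _; rewrite mulr_sumr big_mkcond /=.
by apply: eq_bigr => j _; rewrite /ising_coupling; case: (e i j); rewrite ?mul0r.
Qed.

Lemma ising_corr_gibbs e lam a b :
  ising_corr e lam a b = corr (gibbs_weight (ising_coupling e lam)) (monomial R [:: a; b]).
Proof.
rewrite /ising_corr /corr /wsum /ising_Z; congr (_ / _); apply: eq_bigr => x _.
  by rewrite monomial2 ising_weight_gibbs.
by rewrite mul1r ising_weight_gibbs.
Qed.

Lemma ising_Z_gt0 (e : rel V) (lam : R) : 0 < ising_Z e lam.
Proof.
rewrite /ising_Z /ising_weight (bigD1 [ffun => true]) //= ltr_wpDr ?expR_gt0 //.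
by apply: sumr_ge0 => x _; apply/ltW/expR_gt0.
Qed.

Lemma ising_corr_self (e : rel V) (lam : R) a : ising_corr e lam a a = 1.
Proof.
rewrite /ising_corr (eq_bigr (ising_weight e lam)) ?divff ?lt0r_neq0 ?ising_Z_gt0 //.
by move=> x _; rewrite spin_sq mul1r.
Qed.

End IsingModel.

Lemma sum_count_mem_pair (R : pzSemiRingType) (V : finType) (s : seq (V * V))
    (f : V -> V -> R) :
  \sum_i \sum_j (count_mem (i, j) s)%:R * f i j = \sum_(q <- s) f q.1 q.2.
Proof.
elim: s => [|q s IH].
  by rewrite big_nil big1 // => i _; rewrite big1 // => j _; rewrite mul0r.
rewrite big_cons -IH /=.
transitivity (\sum_i \sum_j (q == (i, j))%:R * f i j +
              \sum_i \sum_j (count_mem (i, j) s)%:R * f i j).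
  rewrite -big_split; apply: eq_bigr => i _; rewrite -big_split.
  by apply: eq_bigr => j _; rewrite natrD mulrDl.
congr (_ + _); rewrite pair_big /= (bigD1 q) //= big1 ?addr0.
  by case: q => ? ? /=; rewrite eqxx mul1r.
by move=> [i j] /= ij; rewrite eq_sym in ij; rewrite (negbTE ij) mul0r.
Qed.

Section PathCouplings.
Variables (R : realType) (V : finType) (e : rel V) (a b : V).
Variables (d : nat) (P : 'I_d -> seq V) (lam : R).
Hypothesis e_simple : simple_graph e.
Hypothesis P_inj : injective P.
Hypothesis P_uniq : forall k, uniq (a :: P k).
Hypothesis P_last : forall k, last a (P k) = b.
Hypothesis P_path : forall k, path e a (P k).
Hypothesis P_disjoint : forall k j, k != j ->
  forall w, w \in internal a (P k) -> w \notin internal a (P j).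
Hypothesis lam_ge0 : 0 <= lam.
Local Notation cfg := {ffun V -> bool}.
Local Notation sp := (spin R).

Definition path_coupling (i j : V) : R := lam / 2 * (\sum_k edge_mult a P k i j)%:R.

Lemma path_coupling_bounds i j : 0 <= path_coupling i j <= ising_coupling e lam i j.
Proof.
have lam2_ge0 : 0 <= lam / 2 by rewrite divr_ge0.
have := sum_edge_mult_le e_simple P_inj P_uniq P_last P_path P_disjoint i j.
rewrite /path_coupling /ising_coupling mulr_ge0 //=; case: (e i j) => [mult_le1 | ].
  by rewrite -[X in _ <= X]mulr1 ler_wpM2l // (ler_nat R _ 1).
by rewrite leqn0 => /eqP ->; rewrite mulr0.
Qed.

Lemma path_coupling_energy (x : cfg) :
  \sum_i \sum_j path_coupling i j * (sp (x i) * sp (x j)) =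
  \sum_k \sum_(q <- path_edges a (P k)) lam * (sp (x q.1) * sp (x q.2)).
Proof.
pose m i j := sp (x i) * sp (x j).
transitivity (\sum_k lam / 2 * \sum_i \sum_j (edge_mult a P k i j)%:R * m i j).
  symmetry; under eq_bigr => k _ do rewrite mulr_sumr.
  under eq_bigr => k _ do under eq_bigr => i _ do rewrite mulr_sumr.
  rewrite exchange_big /=; apply: eq_bigr => i _.
  rewrite exchange_big /=; apply: eq_bigr => j _.
  rewrite /path_coupling natr_sum mulr_sumr mulr_suml.
  by apply: eq_bigr => k _; rewrite /m; ring.
apply: eq_bigr => k _.
have edges_uniq := path_edges_uniq (P_uniq k).
have mult_count i j : (edge_mult a P k i j)%:R * m i j =
    (count_mem (i, j) (path_edges a (P k)))%:R * m i j +
    (count_mem (j, i) (path_edges a (P k)))%:R * m j i.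
  by rewrite !count_uniq_mem // natrD mulrDl /m [sp (x j) * _]mulrC.
under eq_bigr => i _ do under eq_bigr => j _ do rewrite mult_count.
under eq_bigr => i _ do rewrite big_split.
rewrite big_split /= [X in _ * (_ + X)]exchange_big /= !sum_count_mem_pair -mulr_sumr.
by field.
Qed.

Lemma gibbs_path_coupling (x : cfg) :
  gibbs_weight path_coupling x = \prod_k path_weight (coshR lam) (sinhR lam) a (P k) x.
Proof.
rewrite /gibbs_weight path_coupling_energy expR_sum; apply: eq_bigr => k _.
rewrite expR_sum; apply: eq_bigr => q _.
by rewrite expR_sign // -monomial2; apply: monomial_sign.
Qed.

Hypothesis a_neq_b : a != b.

Lemma corr_path_coupling :
  let gp := \prod_k (coshR lam ^+ size (P k) + sinhR lam ^+ size (P k)) in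
  let gm := \prod_k (coshR lam ^+ size (P k) - sinhR lam ^+ size (P k)) in
  corr (gibbs_weight path_coupling) (monomial R [:: a; b]) = (gp - gm) / (gp + gm).
Proof.
move=> gp gm; have P_neq_nil := path_neq_nil P_last a_neq_b.
rewrite /corr /wsum.
under eq_bigr => x _ do rewrite monomial2 gibbs_path_coupling.
under [X in _ / X]eq_bigr => x _ do rewrite gibbs_path_coupling.
rewrite (sum_spin_pair_path_weights _ _ P_uniq P_last P_neq_nil P_disjoint id) //.
rewrite (sum_spin_pair_path_weights _ _ P_uniq P_last P_neq_nil P_disjoint (fun=> 1)) //.
rewrite (sumr_const_div [ffun=> true]).
by rewrite -/gp -/gm !mul1r mulN1r invf_div mulrA divfK ?pnatr_eq0.
Qed.

End PathCouplings.

Lemma tanh_bound_le1 (R : realType) (lam : R) (l d : nat) : 0 < lam ->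
  1 - 2 / (1 + (1 + tanhR lam ^+ l) ^+ d / (1 - tanhR lam ^+ l) ^+ d) <= 1.
Proof.
move=> lam_gt0; set T := tanhR lam ^+ l.
have [T_ge0 T_le1] : 0 <= T /\ T <= 1.
  have [sh_gt0 sh_lt_ch] := (sinhR_gt0 lam_gt0, sinhR_lt_coshR lam).
  have t_ge0 : 0 <= tanhR lam by rewrite tanhRE divr_ge0 ?ltW //; lra.
  have t_le1 : tanhR lam <= 1 by rewrite tanhRE ler_pdivrMr ?mul1r ?ltW //; lra.
  by rewrite exprn_ge0 // exprn_ile1.
have ratio_ge0 : 0 <= (1 + T) ^+ d / (1 - T) ^+ d.
  by rewrite divr_ge0 // exprn_ge0 //; lra.
by rewrite gerBl divr_ge0 //; lra.
Qed.

Unset Implicit Arguments. Set Strict Implicit.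

Theorem lemma3 (R : realType) (V : finType) (e : rel V) (lam : R)
  (l d : nat) (a b : V) :
  simple_graph e -> 0 < lam -> ld_connected e l d a b ->
  1 - 2 / (1 + (1 + tanhR lam ^+ l) ^+ d / (1 - tanhR lam ^+ l) ^+ d)
    <= ising_corr e lam a b.
Proof.
move=> e_simple lam_gt0 [P [P_inj [P_ok P_disj]]].
have [<- | a_neq_b] := eqVneq a b; first by rewrite ising_corr_self tanh_bound_le1.
have P_uniq k : uniq (a :: P k) by case/and3P: (P_ok k).1.
have P_last k : last a (P k) = b by case/and3P: (P_ok k).1 => _ /eqP.
have P_path k : path e a (P k) by case/and3P: (P_ok k).1.
have P_disjoint k j :
    k != j -> forall w, w \in internal a (P k) -> w \notin internal a (P j).
  by move=> kj w; move/allP: (P_disj k j kj); apply.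
have coupling_le :=
  path_coupling_bounds e_simple P_inj P_uniq P_last P_path P_disjoint (ltW lam_gt0).
rewrite ising_corr_gibbs; apply: le_trans (corr_gibbs_le _ coupling_le).
rewrite corr_path_coupling // tanhRE.
apply: paths_ratio_bound (sinhR_gt0 lam_gt0) (sinhR_lt_coshR lam) _ => k.
by rewrite lt0n size_eq0 (path_neq_nil P_last a_neq_b k); case: (P_ok k).
Qed.
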